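(* Let $p\in(1,\infty)$ and let $Y$ be a Banach space whose norm satisfies Rolewicz property $(\beta)$ with power type $p$. Then there exists $\gamma=\gamma(Y)>0$ such that for every non-contractive Lipschitz map $f\colon P^\omega_1\to Y$, $$\|f(r)-f(s)\|\le 3\left(\mathrm{Lip}(f)-\frac{\gamma}{\mathrm{Lip}(f)^{p-1}}\right).$$
   Context: For a Banach space $X$ with closed unit ball $B_X$ and a sequence $(y_n)_{n\ge1}$ in $X$, let $\mathrm{sep}[(y_n)]:=\inf\{\|y_m-y_n\|: m\neq n\}$. The $(\beta)$-modulus of the norm is $$\overline{\beta}_X(t):=1-\sup\Big\{\inf_{n\ge1}\tfrac{\|x+y_n\|}{2}\ :\ x\in B_X,\ (y_n)_{n\ge1}\subset B_X,\ \mathrm{sep}[(y_n)]\ge t\Big\},$$ and the norm satisfies property $(\beta)$ with power type $p$ if there is $c>0$ with $\overline{\beta}_X(t)\ge ct^p$ for all $t\in(0,2]$. The parasol graph $P^\omega_1$ has vertex set $\{r,b,s\}\cup\{t_i:i\ge1\}$ (all distinct) and edges $\{r,b\}$, $\{b,t_i\}$ and $\{t_i,s\}$ for every $i\ge1$; it carries the unweighted shortest-path metric $\rho$ (so $\rho(r,s)=3$). A map $f$ is non-contractive if $\|f(x)-f(y)\|\ge\rho(x,y)$ for all $x,y$; $\mathrm{Lip}(f)$ is its Lipschitz constant. *)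

From Stdlib Require Import Reals Lra.
Open Scope R_scope.

Record Banach := {
  car :> Type;
  vzero : car;
  vadd : car -> car -> car;
  vopp : car -> car;
  vscal : R -> car -> car;
  norm : car -> R;
  vadd_assoc : forall x y z, vadd x (vadd y z) = vadd (vadd x y) z;
  vadd_comm : forall x y, vadd x y = vadd y x;
  vadd_0 : forall x, vadd x vzero = x;
  vadd_opp : forall x, vadd x (vopp x) = vzero;
  vscal_assoc : forall a b x, vscal a (vscal b x) = vscal (a * b) x;
  vscal_1 : forall x, vscal 1 x = x;
  vscal_distr_v : forall a x y, vscal a (vadd x y) = vadd (vscal a x) (vscal a y);
  vscal_distr_s : forall a b x, vscal (a + b) x = vadd (vscal a x) (vscal b x);
  norm_eq0 : forall x, norm x = 0 -> x = vzero;
  norm_triangle : forall x y, norm (vadd x y) <= norm x + norm y;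
  norm_scal : forall a x, norm (vscal a x) = Rabs a * norm x;
  complete : forall u : nat -> car,
    (forall eps, 0 < eps -> exists N, forall m n, (N <= m)%nat -> (N <= n)%nat ->
        norm (vadd (u m) (vopp (u n))) < eps) ->
    exists l, forall eps, 0 < eps -> exists N, forall n, (N <= n)%nat ->
        norm (vadd (u n) (vopp l)) < eps
}.

Definition vsub (X : Banach) (x y : X) : X := vadd X x (vopp X y).

Definition in_ball (X : Banach) (x : X) : Prop := norm X x <= 1.

Definition is_glb (E : R -> Prop) (m : R) : Prop :=
  (forall r, E r -> m <= r) /\ (forall b, (forall r, E r -> b <= r) -> b <= m).

Definition sep_ge (X : Banach) (y : nat -> X) (t : R) : Prop :=
  forall m n, m <> n -> t <= norm X (vsub X (y m) (y n)).

(** The set whose supremum appears in the (beta)-modulus at t: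
    { inf_n ||x + y_n||/2 : x in B_X, (y_n) in B_X, sep[(y_n)] >= t }. *)
Definition beta_set (X : Banach) (t : R) (v : R) : Prop :=
  exists (x : X) (y : nat -> X),
    in_ball X x /\ (forall n, in_ball X (y n)) /\ sep_ge X y t /\
    is_glb (fun r => exists n, r = norm X (vadd X x (y n)) / 2) v.

(** Property (beta) with power type p: exists c > 0 with
    betabar_X(t) = 1 - sup(beta_set t) >= c t^p for all t in (0,2],
    i.e. sup (beta_set t) <= 1 - c t^p, i.e. 1 - c t^p is an upper bound. *)
Definition beta_power_type (X : Banach) (p : R) : Prop :=
  exists c, 0 < c /\
    forall t, 0 < t <= 2 -> forall v, beta_set X t v -> v <= 1 - c * Rpower t p.

(** The parasol graph P^omega_1: vertices r, b, s and t_i (i : nat, a countably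
    infinite family of distinct tips). Edges {r,b}, {b,t_i}, {t_i,s}. *)
Inductive parasol : Type := Pr | Pb | Ps | Pt (i : nat).

Definition rho (u v : parasol) : R :=
  match u, v with
  | Pr, Pr | Pb, Pb | Ps, Ps => 0
  | Pt i, Pt j => if Nat.eqb i j then 0 else 2
  | Pr, Pb | Pb, Pr => 1
  | Pb, Pt _ | Pt _, Pb => 1
  | Pt _, Ps | Ps, Pt _ => 1
  | Pr, Pt _ | Pt _, Pr => 2
  | Pb, Ps | Ps, Pb => 2
  | Pr, Ps | Ps, Pr => 3
  end.

Definition non_contractive (X : Banach) (f : parasol -> X) : Prop :=
  forall u v, rho u v <= norm X (vsub X (f u) (f v)).

Definition lip_ratios (X : Banach) (f : parasol -> X) (r : R) : Prop :=
  exists u v, u <> v /\ r = norm X (vsub X (f u) (f v)) / rho u v.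

Definition is_Lip (X : Banach) (f : parasol -> X) (L : R) : Prop :=
  is_lub (lip_ratios X f) L.

(* Write u = f b, w = f s, d = |u - w| >= 2 and L = Lip f.  The unit vector
   e = (u - w)/d and the points y_n = (f t_n - w)/L of the unit ball are
   2/L-separated, and since |u - f t_n| <= L the identity
   e + y_n + (u - f t_n)/L = (1/d + 1/L)(u - w) forces |e + y_n| >= d/L.
   Property (beta) then yields d/(2L) <= 1 - c (2/L)^p, i.e.
   d <= 2L - 2^(p+1) c / L^(p-1), and |f r - f s| <= L + d concludes. *)
From Stdlib Require Import Reals Lra.
Open Scope R_scope.

Section VectorAlgebra.
Variable X : Banach.

Lemma vscal0 (x : X) : vscal X 0 x = vzero X.
Proof.
  set (y := vscal X 0 x).
  assert (Hy : y = vadd X y y) by (unfold y; rewrite <- vscal_distr_s; f_equal; ring).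
  transitivity (vadd X (vadd X y y) (vopp X y)).
  { rewrite <- vadd_assoc, vadd_opp, vadd_0. reflexivity. }
  rewrite <- Hy. apply vadd_opp.
Qed.

Lemma vopp_scal (x : X) : vopp X x = vscal X (-1) x.
Proof.
  symmetry.
  transitivity (vadd X (vadd X (vscal X (-1) x) (vscal X 1 x)) (vopp X x)).
  { rewrite vscal_1, <- vadd_assoc, vadd_opp, vadd_0. reflexivity. }
  rewrite <- vscal_distr_s. replace (-1 + 1) with 0 by ring.
  rewrite vscal0, vadd_comm, vadd_0. reflexivity.
Qed.

Lemma vadd0l (x : X) : vadd X (vzero X) x = x.
Proof. rewrite vadd_comm; apply vadd_0. Qed.

Lemma vopp_add (x y : X) : vopp X (vadd X x y) = vadd X (vopp X x) (vopp X y).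
Proof. rewrite !vopp_scal. apply vscal_distr_v. Qed.

Lemma vopp_opp (x : X) : vopp X (vopp X x) = x.
Proof.
  rewrite !vopp_scal, vscal_assoc. replace (-1 * -1) with 1 by ring. apply vscal_1.
Qed.

Lemma vsub_chain (a b c : X) : vsub X a c = vadd X (vsub X a b) (vsub X b c).
Proof.
  unfold vsub. rewrite <- vadd_assoc. f_equal.
  rewrite vadd_assoc, (vadd_comm X (vopp X b) b), vadd_opp, vadd0l. reflexivity.
Qed.

Lemma vsub_cancel (a b c : X) : vsub X (vsub X a c) (vsub X b c) = vsub X a b.
Proof.
  unfold vsub. rewrite vopp_add, vopp_opp, <- vadd_assoc. f_equal.
  rewrite (vadd_comm X (vopp X b) c), vadd_assoc, (vadd_comm X (vopp X c) c),
    vadd_opp, vadd0l. reflexivity.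
Qed.

Lemma vscal_sub (k : R) (a b : X) :
  vscal X k (vsub X a b) = vsub X (vscal X k a) (vscal X k b).
Proof.
  unfold vsub. rewrite vscal_distr_v. f_equal.
  rewrite !vopp_scal, !vscal_assoc. f_equal; ring.
Qed.

Lemma norm_scal_nonneg (k : R) (x : X) : 0 <= k -> norm X (vscal X k x) = k * norm X x.
Proof. intro Hk. rewrite norm_scal, Rabs_right; lra. Qed.

Lemma in_ball_scal_inv (k : R) (x : X) :
  0 < k -> norm X x <= k -> in_ball X (vscal X (/ k) x).
Proof.
  intros Hk Hx. unfold in_ball.
  rewrite norm_scal_nonneg by (apply Rlt_le, Rinv_0_lt_compat; lra).
  apply Rmult_le_reg_l with k; [lra|]. rewrite <- Rmult_assoc, Rinv_r; lra.
Qed.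

Lemma norm_unit_add_scaled_ge (u w z : X) (L : R) :
  0 < norm X (vsub X u w) -> 0 < L -> norm X (vsub X u z) <= L ->
  norm X (vsub X u w) / L <=
  norm X (vadd X (vscal X (/ norm X (vsub X u w)) (vsub X u w)) (vscal X (/ L) (vsub X z w))).
Proof.
  set (d := norm X (vsub X u w)). intros Hd HL Huz.
  set (e := vscal X (/ d) (vsub X u w)). set (b := vscal X (/ L) (vsub X z w)).
  set (a := vscal X (/ L) (vsub X u z)).
  assert (Hid : vscal X (/ d + / L) (vsub X u w) = vadd X (vadd X e b) a).
  { unfold e, b, a. rewrite <- vadd_assoc, <- vscal_distr_v,
      (vadd_comm X (vsub X z w)), <- vsub_chain, vscal_distr_s. reflexivity. }
  assert (Ha : norm X a <= 1) by (apply in_ball_scal_inv; assumption).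
  pose proof (norm_triangle X (vadd X e b) a) as Htri.
  rewrite <- Hid, norm_scal_nonneg in Htri.
  2: { pose proof (Rinv_0_lt_compat d Hd). pose proof (Rinv_0_lt_compat L HL). lra. }
  fold d in Htri. replace ((/ d + / L) * d) with (1 + d / L) in Htri by (field; lra).
  lra.
Qed.

End VectorAlgebra.

Lemma glb_of_seq_bounded_below (g : nat -> R) (a : R) :
  (forall n, a <= g n) -> exists m, is_glb (fun r => exists n, r = g n) m.
Proof.
  intro Ha.
  destruct (completeness (fun r => exists n, - r = g n)) as [m [Hub Hlub]].
  { exists (- a). intros r [n Hn]. pose proof (Ha n). lra. }
  { exists (- g 0%nat), 0%nat. ring. }
  exists (- m). split.
  - intros r [n ->]. assert (Hm : - g n <= m) by (apply Hub; exists n; ring). lra.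
  - intros b Hb. enough (m <= - b) by lra. apply Hlub.
    intros r [n Hn]. pose proof (Hb (- r) (ex_intro _ n Hn)). lra.
Qed.

Lemma beta_power_type_inf_le (X : Banach) (p c t a : R) (x : X) (y : nat -> X) :
  (forall t, 0 < t <= 2 -> forall v, beta_set X t v -> v <= 1 - c * Rpower t p) ->
  0 < t <= 2 -> in_ball X x -> (forall n, in_ball X (y n)) -> sep_ge X y t ->
  (forall n, a <= norm X (vadd X x (y n)) / 2) ->
  a <= 1 - c * Rpower t p.
Proof.
  intros Hbeta Ht Hx Hy Hsep Ha.
  destruct (glb_of_seq_bounded_below _ _ Ha) as [m Hm].
  apply Rle_trans with m.
  - apply (proj2 Hm). intros r [n ->]. apply Ha.
  - apply (Hbeta t Ht). exists x, y. auto.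
Qed.

Lemma Rpower_div_mul (a L p : R) :
  0 < a -> 0 < L -> Rpower (a / L) p * L = Rpower a p / Rpower L (p - 1).
Proof.
  intros Ha HL.
  assert (HLp : Rpower L p = Rpower L (p - 1) * L).
  { rewrite <- (Rpower_1 L) at 3 by lra. rewrite <- Rpower_plus. f_equal; ring. }
  assert (Hinv : Rpower (/ L) p = / Rpower L p).
  { unfold Rpower. rewrite ln_Rinv, <- exp_Ropp by lra. f_equal; ring. }
  assert (HLpos : 0 < Rpower L (p - 1)) by apply exp_pos.
  unfold Rdiv at 1. rewrite <- Rpower_mult_distr, Hinv, HLp
    by (try apply Rinv_0_lt_compat; lra).
  field. lra.
Qed.

Lemma rho_pos (u v : parasol) : u <> v -> 0 < rho u v.
Proof.
  destruct u, v; simpl; intros Huv; try lra; try (exfalso; now apply Huv).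
  destruct (Nat.eqb i i0) eqn:E; [|lra].
  apply Nat.eqb_eq in E; subst; exfalso; now apply Huv.
Qed.

Lemma rho_Pt (i j : nat) : i <> j -> rho (Pt i) (Pt j) = 2.
Proof. intro Hij. simpl. apply Nat.eqb_neq in Hij. now rewrite Hij. Qed.

Section ParasolMaps.
Variables (Y : Banach) (f : parasol -> Y) (L : R).
Hypotheses (Hnc : non_contractive Y f) (HL : is_Lip Y f L).

Lemma is_Lip_le (u v : parasol) :
  u <> v -> norm Y (vsub Y (f u) (f v)) <= L * rho u v.
Proof.
  intro Huv. pose proof (rho_pos u v Huv) as Hr.
  pose proof (proj1 HL _ (ex_intro _ u (ex_intro _ v (conj Huv eq_refl)))) as Hratio.
  apply Rmult_le_compat_r with (r := rho u v) in Hratio; [|lra].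
  unfold Rdiv in Hratio. rewrite Rmult_assoc, Rinv_l in Hratio; lra.
Qed.

Lemma is_Lip_ge1 : 1 <= L.
Proof.
  pose proof (Hnc Pr Pb). pose proof (is_Lip_le Pr Pb ltac:(discriminate)).
  simpl in *. lra.
Qed.

Let tip (n : nat) : Y := vscal Y (/ L) (vsub Y (f (Pt n)) (f Ps)).

Lemma tip_in_ball (n : nat) : in_ball Y (tip n).
Proof.
  pose proof is_Lip_ge1. apply in_ball_scal_inv; [lra|].
  pose proof (is_Lip_le (Pt n) Ps ltac:(discriminate)). simpl in *. lra.
Qed.

Lemma tips_sep : sep_ge Y tip (2 / L).
Proof.
  intros i j Hij. pose proof is_Lip_ge1. pose proof (Hnc (Pt i) (Pt j)) as Hij'.
  rewrite rho_Pt in Hij' by exact Hij.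
  unfold tip. rewrite <- vscal_sub, vsub_cancel, norm_scal_nonneg
    by (apply Rlt_le, Rinv_0_lt_compat; lra).
  unfold Rdiv. rewrite Rmult_comm. apply Rmult_le_compat_l; [|lra].
  apply Rlt_le, Rinv_0_lt_compat; lra.
Qed.

Lemma dist_b_s_le (p c : R) :
  (forall t, 0 < t <= 2 -> forall v, beta_set Y t v -> v <= 1 - c * Rpower t p) ->
  norm Y (vsub Y (f Pb) (f Ps)) <= 2 * L * (1 - c * Rpower (2 / L) p).
Proof.
  intro Hbeta. pose proof is_Lip_ge1.
  set (d := norm Y (vsub Y (f Pb) (f Ps))).
  assert (Hd : 2 <= d) by apply (Hnc Pb Ps).
  enough (d / (2 * L) <= 1 - c * Rpower (2 / L) p) as Hle.
  { replace d with (2 * L * (d / (2 * L))) by (field; lra).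
    apply Rmult_le_compat_l; lra. }
  apply (beta_power_type_inf_le Y p c (2 / L) _ (vscal Y (/ d) (vsub Y (f Pb) (f Ps))) tip Hbeta).
  - split; [apply Rdiv_lt_0_compat; lra|].
    apply Rmult_le_reg_l with L; [lra|]. field_simplify; lra.
  - apply in_ball_scal_inv; [lra | apply Rle_refl].
  - exact tip_in_ball.
  - exact tips_sep.
  - intro n. replace (d / (2 * L)) with (d / L / 2) by (field; lra).
    apply Rmult_le_compat_r; [lra|]. unfold tip, d.
    apply norm_unit_add_scaled_ge; fold d; try lra.
    pose proof (is_Lip_le Pb (Pt n) ltac:(discriminate)). simpl in *. lra.
Qed.

End ParasolMaps.

Theorem lemma3 (p : R) (hp : 1 < p) (Y : Banach) (hY : beta_power_type Y p) :
  exists gamma, 0 < gamma /\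
    forall (f : parasol -> Y) (L : R),
      non_contractive Y f -> is_Lip Y f L ->
      norm Y (vsub Y (f Pr) (f Ps)) <= 3 * (L - gamma / Rpower L (p - 1)).
Proof.
  destruct hY as [c [Hc Hbeta]].
  assert (H2p : 0 < Rpower 2 p) by apply exp_pos.
  exists (2 * c * Rpower 2 p / 3). split; [apply Rdiv_lt_0_compat; nra|].
  intros f L Hnc HL.
  pose proof (is_Lip_ge1 Y f L Hnc HL) as HL1.
  assert (HLp : 0 < Rpower L (p - 1)) by apply exp_pos.
  pose proof (is_Lip_le Y f L HL Pr Pb ltac:(discriminate)) as Hrb. simpl in Hrb.
  pose proof (dist_b_s_le Y f L Hnc HL p c Hbeta) as Hbs.
  pose proof (Rpower_div_mul 2 L p ltac:(lra) ltac:(lra)) as Hpow.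
  pose proof (norm_triangle Y (vsub Y (f Pr) (f Pb)) (vsub Y (f Pb) (f Ps))) as Htri.
  rewrite <- vsub_chain in Htri.
  replace (2 * L * (1 - c * Rpower (2 / L) p))
    with (2 * L - 2 * c * (Rpower (2 / L) p * L)) in Hbs by ring.
  rewrite Hpow in Hbs.
  replace (3 * (L - 2 * c * Rpower 2 p / 3 / Rpower L (p - 1)))
    with (L + (2 * L - 2 * c * (Rpower 2 p / Rpower L (p - 1)))) by (field; lra).
  lra.
Qed.
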